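(* Let $T$ be a complete first-order theory and $\varphi(x,y)$ a formula. The following are equivalent: (1) $T$ admits arbitrary cograph consistency-inconsistency patterns for $\varphi(x,y)$; (2) $T$ has a $(2,\omega,\omega)$-weave for $\varphi(x,y)$ of depth $\omega$ (equivalently, a strong one); (3) $T$ has a $(2,1,\omega)$-weave for $\varphi(x,y)$ of depth $\omega$ (equivalently, a strong one); (4) for every $d<\omega$, $T$ has a $(2,\omega,\omega)$-weave for $\varphi(x,y)$ of depth $d$; (5) for every $d<\omega$, $T$ has a $(2,1,\omega)$-weave for $\varphi(x,y)$ of depth $d$.
   Context: Cographs: the smallest class of finite graphs containing the one-vertex graph and closed under disjoint unions (coproducts) and graph joins (disjoint union plus all edges between the two parts). $T$ admits arbitrary cograph consistency-inconsistency patterns for $\varphi(x,y)$ if for every cograph $(V,E)$ there is a family $(b_v:v\in V)$ of parameters in a model of $T$ such that for every $V_0\subseteq V$, $\{\varphi(x,b_v):v\in V_0\}$ is consistent iff $V_0$ is an anticlique (contains no edge). Weaves: $2^2=\{0,1\}^2$; for $L$ an ordinal ($\omega$ or finite $d$), $(2^2)^L$ is the set of functions $L\to2^2$, $(2^2)^{<L}$ the set of sequences of length $<L$, $\tau^\frown a$ concatenation. For $A,B\subseteq(2^2)^L$: $A$ narrowly below $B$: some $\tau\in(2^2)^{<L}$, $i<2$, with all elements of $A$ extending $\tau^\frown(i,0)$ and all of $B$ extending $\tau^\frown(i,1)$; $A$ narrowly to the left of $B$: some $\tau$, $j<2$, $A$'s extending $\tau^\frown(0,j)$, $B$'s extending $\tau^\frown(1,j)$;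 $A$ widely to the left of $B$: some $\sigma$, $A$'s extending $\sigma^\frown(0,0)$ or $\sigma^\frown(0,1)$, $B$'s extending $\sigma^\frown(1,0)$ or $\sigma^\frown(1,1)$. For $n\le\omega$: finite up-$n$-combs form the smallest class of finite sets containing singletons and containing $A\cup B$ whenever $A,B$ are in it, $|A|\le n$ and $A$ narrowly below $B$; finite right-$n$-combs likewise with narrowly left; finite wide right-$n$-combs: smallest class containing singletons and containing $A\cup B$ whenever $A,B$ are finite right-$n$-combs, $|A|\le n$, $A$ widely left of $B$. A $(k,m,n)$-weave for $\varphi$ of depth $L$ is $(b_\sigma:\sigma\in(2^2)^L)$ with $\{\varphi(x,b_\sigma):\sigma\in C\}$ $k$-inconsistent for finite up-$m$-combs $C$ and consistent for finite right-$n$-combs $C$; strong if also consistent for finite wide right-$n$-combs $C$. *)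

From mathcomp Require Import all_boot.
From Stdlib Require List.
Set Implicit Arguments.
Unset Strict Implicit.
Unset Printing Implicit Defensive.

Record signature := Signature {
  fsym : Type; rsym : Type;
  farity : fsym -> nat; rarity : rsym -> nat }.

Inductive term (L : signature) : Type :=
| Var : nat -> term L
| App : forall f : fsym L, ('I_(farity f) -> term L) -> term L.

Inductive formula (L : signature) : Type :=
| FEq : term L -> term L -> formula L
| FRel : forall r : rsym L, ('I_(rarity r) -> term L) -> formula L
| FNeg : formula L -> formula L
| FAnd : formula L -> formula L -> formula L
| FEx : nat -> formula L -> formula L.

Record structure (L : signature) := Structure {
  dom :> Type;
  dom_inh : dom;
  finterp : forall f : fsym L, ('I_(farity f) -> dom) -> dom;
  rinterp : forall r : rsym L, ('I_(rarity r) -> dom) -> Prop }.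

Fixpoint tm_eval (L : signature) (M : structure L) (e : nat -> M) (t : term L) : M :=
  match t with
  | Var i => e i
  | App f args => finterp (fun j => tm_eval e (args j))
  end.

Definition upd (A : Type) (e : nat -> A) (i : nat) (d : A) : nat -> A :=
  fun j => if j == i then d else e j.

Fixpoint sat (L : signature) (M : structure L) (e : nat -> M) (phi : formula L) : Prop :=
  match phi with
  | FEq t1 t2 => tm_eval e t1 = tm_eval e t2
  | FRel r args => rinterp (fun j => tm_eval e (args j))
  | FNeg psi => ~ sat e psi
  | FAnd psi1 psi2 => sat e psi1 /\ sat e psi2
  | FEx i psi => exists d : M, sat (upd e i d) psi
  end.

Fixpoint tm_occ (L : signature) (i : nat) (t : term L) : Prop :=
  match t with
  | Var j => j = i
  | App f args => exists j, tm_occ i (args j)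
  end.

Fixpoint free_in (L : signature) (i : nat) (phi : formula L) : Prop :=
  match phi with
  | FEq t1 t2 => tm_occ i t1 \/ tm_occ i t2
  | FRel r args => exists j, tm_occ i (args j)
  | FNeg psi => free_in i psi
  | FAnd psi1 psi2 => free_in i psi1 \/ free_in i psi2
  | FEx j psi => j <> i /\ free_in i psi
  end.

Definition sentence (L : signature) (phi : formula L) : Prop :=
  forall i, ~ free_in i phi.

Definition models (L : signature) (M : structure L) (T : formula L -> Prop) : Prop :=
  forall psi, T psi -> forall e : nat -> M, sat e psi.

Definition entails (L : signature) (T : formula L -> Prop) (psi : formula L) : Prop :=
  forall M : structure L, models M T -> forall e : nat -> M, sat e psi.

Definition complete_theory (L : signature) (T : formula L -> Prop) : Prop :=
  (forall psi, T psi -> sentence psi) /\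
  (exists M : structure L, models M T) /\
  (forall psi, sentence psi -> entails T psi \/ entails T (FNeg psi)).

(* phi(x,y): x = (v_0,...,v_{n-1}), y = (v_n,...,v_{n+m-1}).
   Assignment for x := a, y := b. *)
Definition xy_env (A : Type) (n : nat) (a b : nat -> A) : nat -> A :=
  fun i => if i < n then a i else b (i - n).

(* {phi(x, b_p) : p in S} is consistent (with the elementary diagram of M):
   for the finite sets S considered here this means it is realized in M. *)
Definition consistent (L : signature) (M : structure L) (n : nat) (phi : formula L)
  (P : Type) (b : P -> nat -> M) (S : P -> Prop) : Prop :=
  exists a : nat -> M, forall p, S p -> sat (xy_env n a (b p)) phi.

Definition k_inconsistent (L : signature) (M : structure L) (n : nat) (phi : formula L)
  (P : Type) (b : P -> nat -> M) (k : nat) (S : P -> Prop) : Prop :=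
  forall l : seq P, size l = k -> List.NoDup l -> (forall p, List.In p l -> S p) ->
    ~ consistent n phi b (fun p => List.In p l).

Definition union_rel (V1 V2 : finType) (E1 : rel V1) (E2 : rel V2) : rel (V1 + V2)%type :=
  fun u v => match u, v with
             | inl x, inl y => E1 x y
             | inr x, inr y => E2 x y
             | _, _ => false
             end.

Definition join_rel (V1 V2 : finType) (E1 : rel V1) (E2 : rel V2) : rel (V1 + V2)%type :=
  fun u v => match u, v with
             | inl x, inl y => E1 x y
             | inr x, inr y => E2 x y
             | _, _ => true
             end.

Inductive cograph : forall V : finType, rel V -> Prop :=
| cograph_one : cograph (V := unit) (fun _ _ => false)
| cograph_union (V1 V2 : finType) (E1 : rel V1) (E2 : rel V2) :
    cograph E1 -> cograph E2 -> cograph (union_rel E1 E2)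
| cograph_join (V1 V2 : finType) (E1 : rel V1) (E2 : rel V2) :
    cograph E1 -> cograph E2 -> cograph (join_rel E1 E2)
| cograph_iso (V W : finType) (E : rel V) (E' : rel W) (f : V -> W) :
    cograph E -> bijective f -> (forall x y, E' (f x) (f y) = E x y) -> cograph E'.

Definition anticlique (V : Type) (E : rel V) (V0 : V -> Prop) : Prop :=
  forall u v, V0 u -> V0 v -> ~~ E u v.

Definition admits_cograph_patterns (L : signature) (T : formula L -> Prop)
  (n : nat) (phi : formula L) : Prop :=
  forall (V : finType) (E : rel V), cograph E ->
    exists M : structure L, models M T /\
    exists b : V -> nat -> M,
      forall V0 : V -> Prop, consistent n phi b V0 <-> anticlique E V0.

(* Weaves. Points of (2^2)^L are abstracted by a type P with a         *)
(* coordinate map get; depth : option nat, None = omega.               *)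
(* Cardinal bounds n <= omega: option nat, None = omega.               *)

Definition lt_depth (depth : option nat) (k : nat) : Prop :=
  match depth with None => True | Some d => k < d end.

Definition card_le (P : Type) (bound : option nat) (A : P -> Prop) : Prop :=
  match bound with
  | None => True
  | Some k => exists l : seq P, size l <= k /\ forall p, A p -> List.In p l
  end.

Definition extends (P : Type) (get : P -> nat -> bool * bool)
  (tau : seq (bool * bool)) (a : bool * bool) (p : P) : Prop :=
  (forall i, i < size tau -> get p i = nth (false, false) tau i) /\ get p (size tau) = a.

Definition narrowly_below (P : Type) (get : P -> nat -> bool * bool) (depth : option nat)
  (A B : P -> Prop) : Prop :=
  exists tau : seq (bool * bool), lt_depth depth (size tau) /\ exists i : bool,
    (forall p, A p -> extends get tau (i, false) p) /\
    (forall p, B p -> extends get tau (i, true) p).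

Definition narrowly_left (P : Type) (get : P -> nat -> bool * bool) (depth : option nat)
  (A B : P -> Prop) : Prop :=
  exists tau : seq (bool * bool), lt_depth depth (size tau) /\ exists j : bool,
    (forall p, A p -> extends get tau (false, j) p) /\
    (forall p, B p -> extends get tau (true, j) p).

Definition widely_left (P : Type) (get : P -> nat -> bool * bool) (depth : option nat)
  (A B : P -> Prop) : Prop :=
  exists sigma : seq (bool * bool), lt_depth depth (size sigma) /\
    (forall p, A p -> extends get sigma (false, false) p \/ extends get sigma (false, true) p) /\
    (forall p, B p -> extends get sigma (true, false) p \/ extends get sigma (true, true) p).

Inductive up_comb (P : Type) (get : P -> nat -> bool * bool) (depth : option nat)
  (bound : option nat) : (P -> Prop) -> Prop :=
| up_comb_single (p : P) : up_comb get depth bound (fun q => q = p)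
| up_comb_union (A B : P -> Prop) :
    up_comb get depth bound A -> up_comb get depth bound B ->
    card_le bound A -> narrowly_below get depth A B ->
    up_comb get depth bound (fun q => A q \/ B q).

Inductive right_comb (P : Type) (get : P -> nat -> bool * bool) (depth : option nat)
  (bound : option nat) : (P -> Prop) -> Prop :=
| right_comb_single (p : P) : right_comb get depth bound (fun q => q = p)
| right_comb_union (A B : P -> Prop) :
    right_comb get depth bound A -> right_comb get depth bound B ->
    card_le bound A -> narrowly_left get depth A B ->
    right_comb get depth bound (fun q => A q \/ B q).

Inductive wide_right_comb (P : Type) (get : P -> nat -> bool * bool) (depth : option nat)
  (bound : option nat) : (P -> Prop) -> Prop :=
| wide_right_comb_single (p : P) : wide_right_comb get depth bound (fun q => q = p)
| wide_right_comb_union (A B : P -> Prop) :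
    right_comb get depth bound A -> right_comb get depth bound B ->
    card_le bound A -> widely_left get depth A B ->
    wide_right_comb get depth bound (fun q => A q \/ B q).

Definition is_weave (L : signature) (M : structure L) (n : nat) (phi : formula L)
  (P : Type) (get : P -> nat -> bool * bool) (depth : option nat)
  (k : nat) (mm nn : option nat) (strong : bool) (b : P -> nat -> M) : Prop :=
  (forall C, up_comb get depth mm C -> k_inconsistent n phi b k C) /\
  (forall C, right_comb get depth nn C -> consistent n phi b C) /\
  (strong -> forall C, wide_right_comb get depth nn C -> consistent n phi b C).

Definition omega_get (s : nat -> bool * bool) (i : nat) : bool * bool := s i.

Definition has_weave_omega (L : signature) (T : formula L -> Prop) (n : nat) (phi : formula L)
  (k : nat) (mm nn : option nat) (strong : bool) : Prop :=
  exists M : structure L, models M T /\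
  exists b : (nat -> bool * bool) -> nat -> M,
    is_weave n phi omega_get None k mm nn strong b.

Definition tuple_get (d : nat) (s : d.-tuple (bool * bool)) (i : nat) : bool * bool :=
  nth (false, false) s i.

Definition has_weave_depth (L : signature) (T : formula L -> Prop) (n : nat) (phi : formula L)
  (d : nat) (k : nat) (mm nn : option nat) (strong : bool) : Prop :=
  exists M : structure L, models M T /\
  exists b : d.-tuple (bool * bool) -> nat -> M,
    is_weave n phi (@tuple_get d) (Some d) k mm nn strong b.

(* For each depth d, join two distinct points of (2^2)^d when their labels at
   the first difference share the first coordinate.  This graph is a cograph
   (cones with the same first coordinate are joined, the others are disjoint),
   up-combs are cliques in it and (wide) right-combs anticliques, so cograph
   patterns give strong weaves of every finite depth; an ultraproduct of
   these, with a point of depth omega read through its truncations, is a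
   strong weave of depth omega.
   Conversely every cograph embeds in (2^2)^omega: the two parts of a
   disjoint union are placed side by side below (0,0) and (1,0), those of a
   join one above the other below (0,0) and (0,1).  Edges then become
   up-1-combs and anticliques right-combs, so any (2,1,omega)-weave, of depth
   omega or of the depth of the embedding, realises the pattern. *)

From mathcomp Require Import all_boot.
From Stdlib Require Import FunctionalExtensionality PropExtensionality ProofIrrelevance.
From Stdlib Require Import ClassicalEpsilon Classical.
From Stdlib Require List.
From mathcomp Require filter.

Set Implicit Arguments.
Unset Strict Implicit.
Unset Printing Implicit Defensive.

Lemma pred_ext (P : Type) (A B : P -> Prop) : (forall q, A q <-> B q) -> A = B.
Proof.
by move=> AB; apply: functional_extensionality => q; apply: propositional_extensionality.
Qed.

Definition img (P Q : Type) (h : P -> Q) (C : P -> Prop) : Q -> Prop :=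
  fun q => exists2 p, C p & q = h p.

Lemma img1 (P Q : Type) (h : P -> Q) (p : P) : img h (fun q => q = p) = (fun q => q = h p).
Proof. by apply: pred_ext => q; split=> [[_ -> ->]|->] //; exists p. Qed.

Lemma imgU (P Q : Type) (h : P -> Q) (A B : P -> Prop) :
  img h (fun q => A q \/ B q) = (fun q => img h A q \/ img h B q).
Proof.
apply: pred_ext => q; split; first by case=> p [Ap|Bp] ->; [left|right]; exists p.
by case=> -[p Cp ->]; exists p => //; [left|right].
Qed.

Lemma img2 (P Q : Type) (h : P -> Q) (x y : P) :
  img h (fun q => q = x \/ q = y) = (fun q => q = h x \/ q = h y).
Proof. by rewrite imgU !img1. Qed.

Lemma img_id (P : Type) (C : P -> Prop) : img id C = C.
Proof. by apply: pred_ext => q; split=> [[p Cp ->]|Cq] //; exists q. Qed.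

Lemma img_comp (P Q R : Type) (h : P -> Q) (h' : Q -> R) (C : P -> Prop) :
  img (fun p => h' (h p)) C = img h' (img h C).
Proof.
apply: pred_ext => r; split; first by case=> p Cp ->; exists (h p) => //; exists p.
by case=> _ [p Cp ->] ->; exists p.
Qed.

Lemma card_le_img (P Q : Type) (h : P -> Q) (bnd : option nat) (A : P -> Prop) :
  card_le bnd A -> card_le bnd (img h A).
Proof.
case: bnd => //= k [l [sz_l lA]]; exists (map h l); rewrite size_map; split=> //.
by move=> _ [p Ap ->]; apply: List.in_map; exact: lA.
Qed.

Lemma consistent_sub (L : signature) (M : structure L) (n : nat) (phi : formula L)
    (P : Type) (b : P -> nat -> M) (S S' : P -> Prop) :
  (forall p, S p -> S' p) -> consistent n phi b S' -> consistent n phi b S.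
Proof. by move=> SS' [a Ha]; exists a => p /SS'; exact: Ha. Qed.

Lemma k_inconsistent2P (L : signature) (M : structure L) (n : nat) (phi : formula L)
    (P : Type) (b : P -> nat -> M) (C : P -> Prop) :
  k_inconsistent n phi b 2 C <->
  (forall p q, C p -> C q -> p <> q -> ~ consistent n phi b (fun r => r = p \/ r = q)).
Proof.
split=> [inc p q Cp Cq npq cons_pq|inc2].
  apply: (inc [:: p; q]) => //.
  - by constructor; [case=> // /esym|constructor; [|constructor]].
  - by move=> r [<-|[<-|[]]].
  - by apply: consistent_sub cons_pq => r [<-|[<-|[]]]; [left|right].
move=> [|p [|q [|]]] //= _ nd inC cons_pq; apply: (inc2 p q).
- by apply: inC; left.
- by apply: inC; right; left.
- by move=> epq; move: nd; rewrite epq => /List.NoDup_cons_iff [] []; left.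
- by apply: consistent_sub cons_pq => r [<-|<-]; [left|right; left].
Qed.

Section CombImage.
Variables (P Q : Type) (get1 : P -> nat -> bool * bool) (get2 : Q -> nat -> bool * bool).
Variables (d1 d2 : option nat) (h : P -> Q) (g : seq (bool * bool) -> seq (bool * bool)).
Hypothesis lt_depth_g : forall tau, lt_depth d1 (size tau) -> lt_depth d2 (size (g tau)).
Hypothesis extends_g : forall tau c p, lt_depth d1 (size tau) ->
  extends get1 tau c p -> extends get2 (g tau) c (h p).

Lemma narrowly_below_img A B :
  narrowly_below get1 d1 A B -> narrowly_below get2 d2 (img h A) (img h B).
Proof.
case=> tau [lt_tau [i [HA HB]]]; exists (g tau); split; first exact: lt_depth_g.
by exists i; split=> _ [p Cp ->]; apply: extends_g => //; [apply: HA|apply: HB].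
Qed.

Lemma narrowly_left_img A B :
  narrowly_left get1 d1 A B -> narrowly_left get2 d2 (img h A) (img h B).
Proof.
case=> tau [lt_tau [j [HA HB]]]; exists (g tau); split; first exact: lt_depth_g.
by exists j; split=> _ [p Cp ->]; apply: extends_g => //; [apply: HA|apply: HB].
Qed.

Lemma widely_left_img A B :
  widely_left get1 d1 A B -> widely_left get2 d2 (img h A) (img h B).
Proof.
case=> tau [lt_tau [HA HB]]; exists (g tau); split; first exact: lt_depth_g.
by split=> _ [p Cp ->]; [case: (HA p Cp)|case: (HB p Cp)] => ext;
  [left|right|left|right]; apply: extends_g.
Qed.

Lemma up_comb_img bnd C : up_comb get1 d1 bnd C -> up_comb get2 d2 bnd (img h C).
Proof.
elim=> [p|A B _ IA _ IB cA AB]; first by rewrite img1; exact: up_comb_single.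
rewrite imgU; apply: up_comb_union => //; [exact: card_le_img|exact: narrowly_below_img].
Qed.

Lemma right_comb_img bnd C : right_comb get1 d1 bnd C -> right_comb get2 d2 bnd (img h C).
Proof.
elim=> [p|A B _ IA _ IB cA AB]; first by rewrite img1; exact: right_comb_single.
rewrite imgU; apply: right_comb_union => //; [exact: card_le_img|exact: narrowly_left_img].
Qed.

Lemma wide_right_comb_img bnd C :
  wide_right_comb get1 d1 bnd C -> wide_right_comb get2 d2 bnd (img h C).
Proof.
case=> [p|A B RA RB cA AB]; first by rewrite img1; exact: wide_right_comb_single.
rewrite imgU; apply: wide_right_comb_union;
  [exact: right_comb_img|exact: right_comb_img|exact: card_le_img|exact: widely_left_img].
Qed.
End CombImage.

Lemma up_comb_unbound (P : Type) (get : P -> nat -> bool * bool) d bnd (C : P -> Prop) :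
  up_comb get d bnd C -> up_comb get d None C.
Proof. by elim=> [p|A B _ IA _ IB _ AB]; [exact: up_comb_single|exact: up_comb_union]. Qed.

Section CombLargeDepth.
Variables (P : Type) (get : P -> nat -> bool * bool) (bnd : option nat).

Lemma up_comb_large_depth C : up_comb get None bnd C ->
  exists D0, forall d, D0 <= d -> up_comb get (Some d) bnd C.
Proof.
elim=> [p|A B _ [DA IA] _ [DB IB] cA [tau [_ [i AB]]]].
  by exists 0 => d _; exact: up_comb_single.
exists (maxn (size tau).+1 (maxn DA DB)) => d; rewrite !geq_max => /and3P [lt_tau dA dB].
by apply: up_comb_union; [exact: IA|exact: IB|by []|exists tau; split=> //; exists i].
Qed.

Lemma right_comb_large_depth C : right_comb get None bnd C ->
  exists D0, forall d, D0 <= d -> right_comb get (Some d) bnd C.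
Proof.
elim=> [p|A B _ [DA IA] _ [DB IB] cA [tau [_ [j AB]]]].
  by exists 0 => d _; exact: right_comb_single.
exists (maxn (size tau).+1 (maxn DA DB)) => d; rewrite !geq_max => /and3P [lt_tau dA dB].
by apply: right_comb_union; [exact: IA|exact: IB|by []|exists tau; split=> //; exists j].
Qed.

Lemma wide_right_comb_large_depth C : wide_right_comb get None bnd C ->
  exists D0, forall d, D0 <= d -> wide_right_comb get (Some d) bnd C.
Proof.
case=> [p|A B RA RB cA [tau [_ AB]]].
  by exists 0 => d _; exact: wide_right_comb_single.
have [DA IA] := right_comb_large_depth RA; have [DB IB] := right_comb_large_depth RB.
exists (maxn (size tau).+1 (maxn DA DB)) => d; rewrite !geq_max => /and3P [lt_tau dA dB].
by apply: wide_right_comb_union; [exact: IA|exact: IB|by []|exists tau].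
Qed.
End CombLargeDepth.

(* [stacked s t]: at the first position where [s] and [t] differ their first
   coordinates agree, i.e. one lies narrowly below the other. *)
Fixpoint stacked (s t : seq (bool * bool)) : bool :=
  match s, t with
  | x :: s', y :: t' => if x == y then stacked s' t' else x.1 == y.1
  | _, _ => false
  end.

Lemma stackedC s t : stacked s t = stacked t s.
Proof.
elim: s t => [|x s IH] [|y t] //=; rewrite eq_sym IH; case: eqP => // _; exact: eq_sym.
Qed.

Lemma stacked_irr s : stacked s s = false.
Proof. by elim: s => //= x s IH; rewrite eqxx. Qed.

Lemma stacked_split tau a b s t :
  (forall i, i < size tau -> nth (false, false) s i = nth (false, false) tau i) ->
  nth (false, false) s (size tau) = a ->
  (forall i, i < size tau -> nth (false, false) t i = nth (false, false) tau i) ->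
  nth (false, false) t (size tau) = b ->
  size tau < size s -> size tau < size t -> a != b ->
  stacked s t = (a.1 == b.1).
Proof.
elim: tau s t => [|c tau IH] [|x s] [|y t] //=; first by move=> _ -> _ -> _ _ /negbTE ->.
move=> s_tau sa t_tau tb lt_s lt_t ab.
have /= -> := s_tau 0 isT; have /= -> := t_tau 0 isT.
rewrite eqxx; apply: IH => // i lt_i.
- exact: (s_tau i.+1).
- exact: (t_tau i.+1).
Qed.

Definition stacked_graph (d : nat) : rel (d.-tuple (bool * bool)) := fun s t => stacked s t.

Lemma stacked_graphC d : symmetric (@stacked_graph d).
Proof. by move=> s t; exact: stackedC. Qed.

Section StackedGraphCograph.
Variable d : nat.
Notation tup := (d.-tuple (bool * bool)).

Definition quadrant_cons (v : (tup + tup) + (tup + tup)) : d.+1.-tuple (bool * bool) :=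
  match v with
  | inl (inl s) => cons_tuple (false, false) s
  | inl (inr s) => cons_tuple (false, true) s
  | inr (inl s) => cons_tuple (true, false) s
  | inr (inr s) => cons_tuple (true, true) s
  end.

Definition quadrant_split (t : d.+1.-tuple (bool * bool)) : (tup + tup) + (tup + tup) :=
  match thead t with
  | (false, false) => inl (inl (behead_tuple t))
  | (false, true) => inl (inr (behead_tuple t))
  | (true, false) => inr (inl (behead_tuple t))
  | (true, true) => inr (inr (behead_tuple t))
  end.

Lemma quadrant_consK : cancel quadrant_cons quadrant_split.
Proof.
have E a (s : tup) : thead (cons_tuple a s) = a /\ behead_tuple (cons_tuple a s) = s.
  by split; [exact: theadE|apply: val_inj].
by case=> [[s|s]|[s|s]]; rewrite /quadrant_split /quadrant_cons;
  [case: (E (false, false) s)|case: (E (false, true) s)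
  |case: (E (true, false) s)|case: (E (true, true) s)] => -> ->.
Qed.

Lemma quadrant_splitK : cancel quadrant_split quadrant_cons.
Proof.
move=> t; rewrite [t in RHS]tuple_eta /quadrant_split.
by case: (thead t) => [[] []]; apply: val_inj.
Qed.

Lemma stacked_quadrant_cons u v :
  stacked_graph (quadrant_cons u) (quadrant_cons v) =
  union_rel (join_rel (@stacked_graph d) (@stacked_graph d))
            (join_rel (@stacked_graph d) (@stacked_graph d)) u v.
Proof. by case: u v => [[s|s]|[s|s]] [[t|t]|[t|t]]. Qed.
End StackedGraphCograph.

Lemma stacked_graph_cograph d : cograph (@stacked_graph d).
Proof.
elim: d => [|d IH].
  apply: (@cograph_iso unit _ (fun _ _ => false) _ (fun _ => [tuple])) => //.
  - exact: cograph_one.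
  - exists (fun _ => tt); first by case.
    by move=> t; apply: val_inj; rewrite /= (size0nil (size_tuple t)).
apply: (cograph_iso _ (f := @quadrant_cons d)); last exact: stacked_quadrant_cons.
- by apply: cograph_union; apply: cograph_join.
- exact: (Bijective (@quadrant_consK d) (@quadrant_splitK d)).
Qed.

Section StackedCombs.
Variables (d : nat) (bnd : option nat).
Notation get := (@tuple_get d).

Lemma stacked_across tau a b (p q : d.-tuple (bool * bool)) :
  lt_depth (Some d) (size tau) ->
  extends get tau a p -> extends get tau b q -> a != b ->
  stacked_graph p q = (a.1 == b.1).
Proof.
move=> /= lt_tau [p_tau pa] [q_tau qb] ab.
by apply: (stacked_split (tau := tau)) => //; rewrite size_tuple.
Qed.

Lemma up_comb_clique C : up_comb get (Some d) bnd C ->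
  forall p q, C p -> C q -> p <> q -> stacked_graph p q.
Proof.
elim=> [p0|A B _ IA _ IB _ [tau [lt_tau [i [HA HB]]]]]; first by move=> p q -> ->.
move=> p q [Ap|Bp] [Aq|Bq] pq; [exact: IA| | |exact: IB].
- by rewrite (stacked_across lt_tau (HA p Ap) (HB q Bq)) //; case: i {HA HB}.
- by rewrite stacked_graphC (stacked_across lt_tau (HA q Aq) (HB p Bp)) //; case: i {HA HB}.
Qed.

Lemma right_comb_anticlique C : right_comb get (Some d) bnd C ->
  anticlique (@stacked_graph d) C.
Proof.
elim=> [p0|A B _ IA _ IB _ [tau [lt_tau [j [HA HB]]]]].
  by move=> p q -> ->; rewrite /stacked_graph stacked_irr.
move=> p q [Ap|Bp] [Aq|Bq]; [exact: IA| | |exact: IB].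
- by rewrite (stacked_across lt_tau (HA p Ap) (HB q Bq)) //; case: j {HA HB}.
- by rewrite stacked_graphC (stacked_across lt_tau (HA q Aq) (HB p Bp)) //; case: j {HA HB}.
Qed.

Lemma wide_right_comb_anticlique C : wide_right_comb get (Some d) bnd C ->
  anticlique (@stacked_graph d) C.
Proof.
case=> [p0|A B RA RB _ [tau [lt_tau [HA HB]]]].
  by move=> p q -> ->; rewrite /stacked_graph stacked_irr.
move=> p q [Ap|Bp] [Aq|Bq];
  [exact: (right_comb_anticlique RA)| | |exact: (right_comb_anticlique RB)].
- by case: (HA p Ap) => Hp; case: (HB q Bq) => Hq; rewrite (stacked_across lt_tau Hp Hq).
- by case: (HA q Aq) => Hq; case: (HB p Bp) => Hp;
    rewrite stacked_graphC (stacked_across lt_tau Hq Hp).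
Qed.
End StackedCombs.

Lemma weave_depth_of_cograph_patterns (L : signature) (T : formula L -> Prop) n phi :
  admits_cograph_patterns T n phi -> forall d, has_weave_depth T n phi d 2 None None true.
Proof.
move=> patterns d; have [M [MT [b pattern_b]]] := patterns _ _ (stacked_graph_cograph d).
exists M; split=> //; exists b; split; [|split].
- move=> C /up_comb_clique clique_C; apply/k_inconsistent2P => p q Cp Cq pq /pattern_b anti.
  by move: (anti p q (or_introl erefl) (or_intror erefl)); rewrite clique_C.
- by move=> C /right_comb_anticlique anti; apply/pattern_b.
- by move=> _ C /wide_right_comb_anticlique anti; apply/pattern_b.
Qed.

Definition empty_or_right_comb (P : Type) (get : P -> nat -> bool * bool) (d : option nat)
  (C : P -> Prop) : Prop := (forall p, ~ C p) \/ right_comb get d None C.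

Lemma empty_or_right_combU (P : Type) (get : P -> nat -> bool * bool) d (A B : P -> Prop) :
  empty_or_right_comb get d A -> empty_or_right_comb get d B ->
  ((exists p, A p) -> (exists p, B p) -> narrowly_left get d A B) ->
  empty_or_right_comb get d (fun q => A q \/ B q).
Proof.
have emptyU (X Y : P -> Prop) : (forall p, ~ X p) -> (fun q => X q \/ Y q) = Y.
  by move=> X0; apply: pred_ext => q; split=> [[/X0 []|]|] //; right.
have emptyUC (X Y : P -> Prop) : (fun q => X q \/ Y q) = (fun q => Y q \/ X q).
  by apply: pred_ext => q; split=> -[]; auto.
move=> [A0|RA] [B0|RB] AB.
- by left=> p [/A0|/B0].
- by rewrite emptyU //; right.
- by rewrite emptyUC emptyU //; right.
right; case: (classic (exists p, A p)) => [exA|nexA]; last first.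
  by rewrite emptyU // => p Ap; apply: nexA; exists p.
case: (classic (exists p, B p)) => [exB|nexB]; last first.
  by rewrite emptyUC emptyU // => p Bp; apply: nexB; exists p.
by apply: right_comb_union => //; exact: AB.
Qed.

Definition pcons (a : bool * bool) (s : nat -> bool * bool) : nat -> bool * bool :=
  fun i => if i is k.+1 then s k else a.

Lemma extends_pcons a tau c (p : nat -> bool * bool) :
  extends omega_get tau c p -> extends omega_get (a :: tau) c (pcons a p).
Proof. by case=> p_tau pc; split=> [[|i] // /p_tau|]. Qed.

Section PconsCombs.
Variables (a : bool * bool) (D : nat) (bnd : option nat) (C : (nat -> bool * bool) -> Prop).

Lemma up_comb_pcons : up_comb omega_get (Some D) bnd C ->
  up_comb omega_get (Some D.+1) bnd (img (pcons a) C).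
Proof. by apply: (up_comb_img (g := cons a)) => // tau c p _; exact: extends_pcons. Qed.

Lemma empty_or_right_comb_pcons : empty_or_right_comb omega_get (Some D) C ->
  empty_or_right_comb omega_get (Some D.+1) (img (pcons a) C).
Proof.
case=> [C0|RC]; first by left=> _ [p Cp _]; exact: C0 Cp.
by right; apply: (right_comb_img (g := cons a) _ _ RC) => // tau c p _; exact: extends_pcons.
Qed.
End PconsCombs.

Section CombDepthMono.
Variables (d d' : option nat) (dd' : forall k, lt_depth d k -> lt_depth d' k).
Variables (bnd : option nat) (C : (nat -> bool * bool) -> Prop).

Lemma up_comb_depth_mono : up_comb omega_get d bnd C -> up_comb omega_get d' bnd C.
Proof.
by move=> /(up_comb_img (h := id) (g := id) (fun tau => @dd' (size tau)) (fun _ _ _ _ => id));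
  rewrite img_id.
Qed.

Lemma right_comb_depth_mono : right_comb omega_get d bnd C -> right_comb omega_get d' bnd C.
Proof.
by move=> /(right_comb_img (h := id) (g := id) (fun tau => @dd' (size tau)) (fun _ _ _ _ => id));
  rewrite img_id.
Qed.
End CombDepthMono.

Definition distinct_below (V : Type) (D : nat) (f : V -> nat -> bool * bool) : Prop :=
  forall u v, u <> v -> exists2 i, i < D & f u i <> f v i.

(* Vertices go to points of depth omega; only the first [D] coordinates matter. *)
Definition cograph_embedding (V : finType) (E : rel V) (D : nat)
    (f : V -> nat -> bool * bool) : Prop :=
  [/\ distinct_below D f,
      forall u v, E u v -> up_comb omega_get (Some D) (Some 1) (fun q => q = f u \/ q = f v),
      forall V0, anticlique E V0 -> empty_or_right_comb omega_get (Some D) (img f V0) &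
      irreflexive E].

Lemma cograph_embedding_depth_mono (V : finType) (E : rel V) D D' f :
  D <= D' -> cograph_embedding E D f -> cograph_embedding E D' f.
Proof.
move=> DD' [dist up anti irr]; split=> //.
- by move=> u v /dist [i lt_i fuv]; exists i => //; exact: leq_trans lt_i _.
- by move=> u v /up; apply: up_comb_depth_mono => k /= lt_k; exact: leq_trans DD'.
- move=> V0 /anti [V00|RV0]; [by left|right].
  by apply: right_comb_depth_mono RV0 => k /= lt_k; exact: leq_trans DD'.
Qed.

Definition pcons_sum (V1 V2 : Type) (a1 a2 : bool * bool)
    (f1 : V1 -> nat -> bool * bool) (f2 : V2 -> nat -> bool * bool) (v : V1 + V2) :
    nat -> bool * bool :=
  match v with inl x => pcons a1 (f1 x) | inr y => pcons a2 (f2 y) end.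

Section PconsSum.
Variables (V1 V2 : finType) (E1 : rel V1) (E2 : rel V2) (D : nat).
Variables (f1 : V1 -> nat -> bool * bool) (f2 : V2 -> nat -> bool * bool).
Hypotheses (emb1 : cograph_embedding E1 D f1) (emb2 : cograph_embedding E2 D f2).

Lemma img_pcons_sum a1 a2 (V0 : V1 + V2 -> Prop) :
  img (pcons_sum a1 a2 f1 f2) V0 =
  (fun q => img (pcons a1) (img f1 (fun x => V0 (inl x))) q \/
            img (pcons a2) (img f2 (fun y => V0 (inr y))) q).
Proof.
apply: pred_ext => q; split.
- by case=> -[x|y] V0v ->; [left; exists (f1 x)|right; exists (f2 y)] => //; [exists x|exists y].
- by case=> -[_ [x V0x ->] ->]; [exists (inl x)|exists (inr x)].
Qed.

Lemma distinct_below_pcons_sum a1 a2 : a1 != a2 ->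
  distinct_below D.+1 (pcons_sum a1 a2 f1 f2).
Proof.
case: emb1 emb2 => [dist1 _ _ _] [dist2 _ _ _] a12.
move=> [x|x] [y|y] xy; try by exists 0 => //= e; move: a12; rewrite e eqxx.
- by have [|i lt_i] := dist1 x y; [congruence|exists i.+1].
- by have [|i lt_i] := dist2 x y; [congruence|exists i.+1].
Qed.

Lemma pcons_sum_up_comb a1 a2 (R : rel (V1 + V2)%type) :
  (forall x y, R (inl x) (inl y) = E1 x y) -> (forall x y, R (inr x) (inr y) = E2 x y) ->
  (forall x y, R (inl x) (inr y) ->
     up_comb omega_get (Some D.+1) (Some 1)
       (fun q => q = pcons a1 (f1 x) \/ q = pcons a2 (f2 y))) ->
  (forall x y, R (inl x) (inr y) = R (inr y) (inl x)) ->
  forall u v, R u v -> up_comb omega_get (Some D.+1) (Some 1)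
    (fun q => q = pcons_sum a1 a2 f1 f2 u \/ q = pcons_sum a1 a2 f1 f2 v).
Proof.
case: emb1 emb2 => [_ up1 _ _] [_ up2 _ _] R1 R2 cross Rsym.
have swap (p q : nat -> bool * bool) :
    (fun r => r = p \/ r = q) = (fun r => r = q \/ r = p).
  by apply: pred_ext => r; split=> -[]; auto.
move=> [x|x] [y|y] /=.
- by rewrite R1 -img2 => /up1; exact: up_comb_pcons.
- exact: cross.
- by rewrite -Rsym swap; exact: cross.
- by rewrite R2 -img2 => /up2; exact: up_comb_pcons.
Qed.

Lemma pcons_sum_anticlique a1 a2 (V0 : V1 + V2 -> Prop) :
  anticlique E1 (fun x => V0 (inl x)) -> anticlique E2 (fun y => V0 (inr y)) ->
  ((exists x, V0 (inl x)) -> (exists y, V0 (inr y)) -> a1 = (false, false) /\ a2 = (true, false)) ->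
  empty_or_right_comb omega_get (Some D.+1) (img (pcons_sum a1 a2 f1 f2) V0).
Proof.
case: emb1 emb2 => [_ _ anti1 _] [_ _ anti2 _] V01 V02 sides.
rewrite img_pcons_sum; apply: empty_or_right_combU.
- exact/empty_or_right_comb_pcons/anti1.
- exact/empty_or_right_comb_pcons/anti2.
move=> [q [q' [x V0x _] _]] [r [r' [y V0y _] _]].
have [-> ->] := sides (ex_intro _ x V0x) (ex_intro _ y V0y).
by exists [::]; split=> //; exists false; split=> _ [s _ ->].
Qed.

Lemma cograph_embedding_union :
  cograph_embedding (union_rel E1 E2) D.+1 (pcons_sum (false, false) (true, false) f1 f2).
Proof.
split; first exact: distinct_below_pcons_sum.
- by apply: pcons_sum_up_comb.
- move=> V0 anti; apply: pcons_sum_anticlique => //.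
  + by move=> u v V0u V0v; exact: (anti (inl u) (inl v)).
  + by move=> u v V0u V0v; exact: (anti (inr u) (inr v)).
- by case: emb1 emb2 => [_ _ _ irr1] [_ _ _ irr2] [x|x] /=.
Qed.

(* [pcons (0,0) _] lies narrowly below [pcons (0,1) _], with a singleton below. *)
Lemma cograph_embedding_join :
  cograph_embedding (join_rel E1 E2) D.+1 (pcons_sum (false, false) (false, true) f1 f2).
Proof.
split; first exact: distinct_below_pcons_sum.
- apply: pcons_sum_up_comb => // x y _.
  apply: up_comb_union; [exact: up_comb_single|exact: up_comb_single| |].
  + by exists [:: pcons (false, false) (f1 x)]; split=> // q ->; left.
  + by exists [::]; split=> //; exists false; split=> q ->.
- move=> V0 anti; apply: pcons_sum_anticlique.
  + by move=> u v V0u V0v; exact: (anti (inl u) (inl v)).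
  + by move=> u v V0u V0v; exact: (anti (inr u) (inr v)).
  + by move=> [x V0x] [y V0y]; have := anti (inl x) (inr y) V0x V0y.
- by case: emb1 emb2 => [_ _ _ irr1] [_ _ _ irr2] [x|x] /=.
Qed.
End PconsSum.

Lemma cograph_embedding_iso (V W : finType) (E : rel V) (E' : rel W) (f0 : V -> W)
    (g0 : W -> V) D f :
  cancel f0 g0 -> cancel g0 f0 -> (forall x y, E' (f0 x) (f0 y) = E x y) ->
  cograph_embedding E D f -> cograph_embedding E' D (fun w => f (g0 w)).
Proof.
move=> f0K g0K E'E [dist up anti irr]; split.
- by move=> u v uv; apply: dist => e; apply: uv; rewrite -(g0K u) -(g0K v) e.
- by move=> u v; rewrite -{1}(g0K u) -{1}(g0K v) E'E; exact: up.
- move=> V0 anti0.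
  have anti0' : anticlique E (fun v => V0 (f0 v)).
    by move=> u v V0u V0v; rewrite -E'E; exact: anti0.
  have -> : img (fun w => f (g0 w)) V0 = img f (fun v => V0 (f0 v)).
    apply: pred_ext => q; split=> -[x V0x ->]; first by exists (g0 x); rewrite ?g0K.
    by exists (f0 x); rewrite ?f0K.
  exact: anti.
- by move=> u; rewrite -(g0K u) E'E.
Qed.

Lemma cograph_embedding_exists (V : finType) (E : rel V) :
  cograph E -> exists D f, cograph_embedding E D f.
Proof.
elim=> {V E} [|V1 V2 E1 E2 _ [D1 [f1 emb1]] _ [D2 [f2 emb2]]
              |V1 V2 E1 E2 _ [D1 [f1 emb1]] _ [D2 [f2 emb2]]
              |V W E E' f0 _ [D [f emb]] [g0 f0K g0K] E'E].
- exists 0, (fun _ _ => (false, false)); split=> // [[] [] //|V0 _].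
  case: (classic (V0 tt)) => [V0tt|V0tt]; last by left=> q [[] /V0tt].
  right; suff -> : img (fun (_ : unit) (_ : nat) => (false, false)) V0 =
                   (fun q => q = (fun _ => (false, false))) by exact: right_comb_single.
  by apply: pred_ext => q; split=> [[[] _ ->]|->] //; exists tt.
- exists (maxn D1 D2).+1, (pcons_sum (false, false) (true, false) f1 f2).
  by apply: cograph_embedding_union; apply: cograph_embedding_depth_mono;
    [|exact: emb1| |exact: emb2]; rewrite ?leq_maxl ?leq_maxr.
- exists (maxn D1 D2).+1, (pcons_sum (false, false) (false, true) f1 f2).
  by apply: cograph_embedding_join; apply: cograph_embedding_depth_mono;
    [|exact: emb1| |exact: emb2]; rewrite ?leq_maxl ?leq_maxr.
- by exists D, (fun w => f (g0 w)); exact: cograph_embedding_iso emb.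
Qed.

Lemma cograph_patterns_of_weave (L : signature) (M : structure L) n phi (V : finType) (E : rel V)
    (P : Type) (get : P -> nat -> bool * bool) dd (b : P -> nat -> M) (f : V -> P) :
  is_weave n phi get dd 2 (Some 1) None false b ->
  injective f -> irreflexive E ->
  (forall u v, E u v -> up_comb get dd (Some 1) (fun q => q = f u \/ q = f v)) ->
  (forall V0, anticlique E V0 -> empty_or_right_comb get dd (img f V0)) ->
  forall V0 : V -> Prop, consistent n phi (fun v => b (f v)) V0 <-> anticlique E V0.
Proof.
move=> [up_inc [right_cons _]] f_inj irr up anti V0; split.
- move=> [a Ha] u v V0u V0v; apply/negP => Euv.
  have /k_inconsistent2P := up_inc _ (up _ _ Euv); apply=> //; first by left.
  + by right.
  + by move=> /f_inj euv; move: Euv; rewrite euv irr.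
  + by exists a => _ [->|->]; exact: Ha.
- move=> /anti [V00|RV0].
  + by exists (fun _ => dom_inh M) => v V0v; case: (V00 (f v)); exists v.
  + by have [a Ha] := right_cons _ RV0; exists a => v V0v; apply: Ha; exists v.
Qed.

Lemma cograph_patterns_of_weave_omega (L : signature) (T : formula L -> Prop) n phi :
  has_weave_omega T n phi 2 (Some 1) None false -> admits_cograph_patterns T n phi.
Proof.
move=> [M [MT [b weave_b]]] V E /cograph_embedding_exists [D [f [dist up anti irr]]].
exists M; split=> //; exists (fun v => b (f v)).
apply: (cograph_patterns_of_weave weave_b) => //.
- move=> u v fuv; apply: NNPP => uv.
  by have [i _] := dist u v uv; rewrite fuv.
- by move=> u v /up; exact: up_comb_depth_mono.
- by move=> V0 /anti [V00|RV0]; [left|right; exact: right_comb_depth_mono RV0].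
Qed.

Definition trunc (d : nat) (s : nat -> bool * bool) : d.-tuple (bool * bool) :=
  @Tuple d _ (mkseq s d) (introT eqP (size_mkseq s d)).

Lemma trunc_get d s i : i < d -> tuple_get (trunc d s) i = s i.
Proof. by move=> lt_i; rewrite /tuple_get /= nth_mkseq. Qed.

Lemma extends_trunc d tau c (p : nat -> bool * bool) : lt_depth (Some d) (size tau) ->
  extends omega_get tau c p -> extends (@tuple_get d) tau c (trunc d p).
Proof.
move=> /= lt_tau [p_tau pc]; split; last by rewrite trunc_get.
by move=> i lt_i; rewrite trunc_get; [exact: p_tau|exact: ltn_trans lt_i lt_tau].
Qed.

Section TruncCombs.
Variables (d : nat) (bnd : option nat) (C : (nat -> bool * bool) -> Prop).

Lemma up_comb_trunc : up_comb omega_get (Some d) bnd C ->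
  up_comb (@tuple_get d) (Some d) bnd (img (trunc d) C).
Proof. exact: (up_comb_img (g := id) (fun _ => id) (@extends_trunc d)). Qed.

Lemma right_comb_trunc : right_comb omega_get (Some d) bnd C ->
  right_comb (@tuple_get d) (Some d) bnd (img (trunc d) C).
Proof. exact: (right_comb_img (g := id) (fun _ => id) (@extends_trunc d)). Qed.

Lemma wide_right_comb_trunc : wide_right_comb omega_get (Some d) bnd C ->
  wide_right_comb (@tuple_get d) (Some d) bnd (img (trunc d) C).
Proof. exact: (wide_right_comb_img (g := id) (fun _ => id) (@extends_trunc d)). Qed.
End TruncCombs.

Lemma cograph_patterns_of_weave_depths (L : signature) (T : formula L -> Prop) n phi :
  (forall d, has_weave_depth T n phi d 2 (Some 1) None false) -> admits_cograph_patterns T n phi.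
Proof.
move=> weaves V E /cograph_embedding_exists [D [f [dist up anti irr]]].
have [M [MT [b weave_b]]] := weaves D.
exists M; split=> //; exists (fun v => b (trunc D (f v))).
apply: (cograph_patterns_of_weave (f := fun v => trunc D (f v)) weave_b) => //.
- move=> u v fuv; apply: NNPP => uv.
  have [i lt_i []] := dist u v uv.
  by rewrite -(trunc_get (f u) lt_i) -(trunc_get (f v) lt_i) fuv.
- by move=> u v /up /up_comb_trunc; rewrite img2.
- move=> V0 /anti [V00|RV0]; [by left=> _ [v V0v _]; case: (V00 (f v)); exists v|right].
  by rewrite img_comp; exact: right_comb_trunc.
Qed.

Lemma dep_choice (I : Type) (A : I -> Type) (R : forall i, A i -> Prop) :
  (forall i, exists a, R i a) -> exists f : forall i, A i, forall i, R i (f i).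
Proof.
move=> HR; exists (fun i => proj1_sig (constructive_indefinite_description _ (HR i))).
by move=> i; exact: proj2_sig (constructive_indefinite_description _ (HR i)).
Qed.

Record ultrafilter (I : Type) := Ultrafilter {
  umem :> (I -> Prop) -> Prop;
  umemT : umem (fun _ => True);
  umemI : forall A B, umem A -> umem B -> umem (fun i => A i /\ B i);
  umemS : forall A B : I -> Prop, (forall i, A i -> B i) -> umem A -> umem B;
  umem0 : ~ umem (fun _ => False);
  umemC : forall A, umem A \/ umem (fun i => ~ A i) }.
Arguments umemI {I} u {A B}.
Arguments umemS {I} u {A B}.
Arguments umem0 {I} u.
Arguments umemC {I} u A.

Section Ultraproduct.
Variables (L : signature) (I : Type) (Mf : I -> structure L) (U : ultrafilter I).

Lemma umem_all A : (forall i, A i) -> U A.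
Proof. by move=> HA; apply: (umemS U) (umemT U) => i _; exact: HA. Qed.

Lemma umem_ex A : U A -> exists i, A i.
Proof.
move=> UA; apply: NNPP => nex; apply: (umem0 U).
by apply: (umemS U) UA => i Ai; apply: nex; exists i.
Qed.

Lemma umem_ord k (A : 'I_k -> I -> Prop) : (forall j, U (A j)) -> U (fun i => forall j, A j i).
Proof.
move=> UA; suff U_in (s : seq 'I_k) : U (fun i => forall j, j \in s -> A j i).
  by apply: (umemS U) (U_in (enum 'I_k)) => i Ai j; apply: Ai; rewrite mem_enum.
elim: s => [|j s IH]; first exact: umem_all.
apply: (umemS U) (umemI U (UA j) IH) => i [Aji As] j'; rewrite in_cons => /orP [/eqP ->|/As] //.
Qed.

Definition uprod := forall i, Mf i.
Definition ueq (f g : uprod) : Prop := U (fun i => f i = g i).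

Lemma ueq_refl f : ueq f f.
Proof. exact: umem_all. Qed.

Lemma ueq_sym f g : ueq f g -> ueq g f.
Proof. exact: (umemS U). Qed.

Lemma ueq_trans f g h : ueq f g -> ueq g h -> ueq f h.
Proof. by move=> fg gh; apply: (umemS U) (umemI U fg gh) => i [-> ->]. Qed.

(* Elements of the ultraproduct are the [ueq]-classes, represented as predicates. *)
Definition uclass := {C : uprod -> Prop | exists f, C = ueq f}.
Definition ucls (f : uprod) : uclass := exist _ (ueq f) (ex_intro _ f erefl).
Definition urep (c : uclass) : uprod :=
  proj1_sig (constructive_indefinite_description _ (proj2_sig c)).

Lemma uclass_ext (c1 c2 : uclass) : proj1_sig c1 = proj1_sig c2 -> c1 = c2.
Proof. by case: c1 c2 => [C1 H1] [C2 H2] /= e; subst C2; f_equal; exact: proof_irrelevance. Qed.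

Lemma ucls_eq f g : ucls f = ucls g <-> ueq f g.
Proof.
split=> [e|fg]; first by have : proj1_sig (ucls f) g by rewrite e; exact: ueq_refl.
apply: uclass_ext; apply: pred_ext => h /=.
by split=> [fh|gh]; [exact: ueq_trans (ueq_sym fg) fh|exact: ueq_trans fg gh].
Qed.

Lemma urepK c : ucls (urep c) = c.
Proof.
apply: uclass_ext; rewrite /urep; case: (constructive_indefinite_description _ _) => f /= ->.
by [].
Qed.

Lemma ueq_urep f : ueq (urep (ucls f)) f.
Proof. by apply/ucls_eq; rewrite urepK. Qed.

Definition ultraproduct : structure L :=
  @Structure L uclass (ucls (fun i => dom_inh (Mf i)))
    (fun f args => ucls (fun i => finterp (fun j => urep (args j) i)))
    (fun r args => U (fun i => rinterp (fun j => urep (args j) i))).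

Lemma env_ucls (e : nat -> ultraproduct) : e = (fun k => ucls (urep (e k))).
Proof. by apply: functional_extensionality => k; rewrite urepK. Qed.

Fixpoint term_nested_ind (P : term L -> Prop) (HV : forall k, P (Var L k))
  (HA : forall f args, (forall j, P (args j)) -> P (@App L f args)) t : P t :=
  match t with
  | Var k => HV k
  | @App _ f args => HA f args (fun j => term_nested_ind HV HA (args j))
  end.

Notation coord_env r i := (fun k => r k i).

Lemma los_term (r : nat -> uprod) t :
  tm_eval (M := ultraproduct) (fun k => ucls (r k)) t =
  ucls (fun i => tm_eval (M := Mf i) (coord_env r i) t).
Proof.
elim/term_nested_ind: t => [k|f args IH] //=; apply/ucls_eq.
have Uargs j : ueq (urep (tm_eval (M := ultraproduct) (fun k => ucls (r k)) (args j)))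
                   (fun i => tm_eval (M := Mf i) (coord_env r i) (args j)).
  by rewrite IH; exact: ueq_urep.
apply: (umemS U) (umem_ord Uargs) => i args_i /=.
by congr finterp; apply: functional_extensionality.
Qed.

Lemma upd_ucls (r : nat -> uprod) k (s : uprod) :
  upd (fun k => ucls (r k)) k (ucls s) = (fun k' => ucls (upd r k s k')).
Proof. by apply: functional_extensionality => k'; rewrite /upd; case: eqP. Qed.

Lemma upd_coord (r : nat -> uprod) k (s : uprod) i :
  coord_env (upd r k s) i = upd (coord_env r i) k (s i).
Proof. by apply: functional_extensionality => k'; rewrite /upd; case: eqP. Qed.

Section LosExists.
Variables (k : nat) (psi : formula L).
Hypothesis los_psi : forall r : nat -> uprod,
  sat (M := ultraproduct) (fun k => ucls (r k)) psi <->
  U (fun i => sat (M := Mf i) (coord_env r i) psi).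

(* The witness in the ultraproduct picks a witness in every factor where one exists. *)
Lemma los_exists (r : nat -> uprod) :
  sat (M := ultraproduct) (fun k => ucls (r k)) (FEx k psi) <->
  U (fun i => sat (M := Mf i) (coord_env r i) (FEx k psi)).
Proof.
split=> /= [[c]|Uex].
  rewrite -[c]urepK upd_ucls los_psi; apply: (umemS U) => i sat_i.
  by exists (urep c i); rewrite -upd_coord.
have witness i : exists a : Mf i,
    (exists a', sat (M := Mf i) (upd (coord_env r i) k a') psi) ->
    sat (M := Mf i) (upd (coord_env r i) k a) psi.
  case: (classic (exists a, sat (M := Mf i) (upd (coord_env r i) k a) psi)) => [[a sat_a]|nex].
    by exists a.
  by exists (dom_inh (Mf i)).
have [s Hs] := dep_choice witness.
exists (ucls s); rewrite upd_ucls los_psi; apply: (umemS U) Uex => i /Hs.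
by rewrite upd_coord.
Qed.
End LosExists.

Theorem los (phi : formula L) (r : nat -> uprod) :
  sat (M := ultraproduct) (fun k => ucls (r k)) phi <->
  U (fun i => sat (M := Mf i) (coord_env r i) phi).
Proof.
elim: phi r => [t1 t2|R args|psi IH|psi1 IH1 psi2 IH2|k psi IH] r /=.
- by rewrite !los_term; exact: ucls_eq.
- have Uargs j : ueq (urep (tm_eval (M := ultraproduct) (fun k => ucls (r k)) (args j)))
                     (fun i => tm_eval (M := Mf i) (coord_env r i) (args j)).
    by rewrite los_term; exact: ueq_urep.
  have args_eq i : (forall j, urep (tm_eval (M := ultraproduct) (fun k => ucls (r k)) (args j)) i =
                              tm_eval (M := Mf i) (coord_env r i) (args j)) ->
      (fun j => urep (tm_eval (M := ultraproduct) (fun k => ucls (r k)) (args j)) i) =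
      (fun j => tm_eval (M := Mf i) (coord_env r i) (args j)).
    exact: functional_extensionality.
  split=> UR; apply: (umemS U) (umemI U UR (umem_ord Uargs)) => i [Ri /args_eq eq_i].
  + by rewrite -eq_i.
  + by rewrite eq_i.
- rewrite IH; split=> [nU|Upsi Uneg]; first by case: (umemC U (fun i => sat (coord_env r i) psi)).
  by apply: (umem0 U); apply: (umemS U) (umemI U Upsi Uneg) => i [].
- rewrite IH1 IH2; split=> [[U1 U2]|U12]; first exact: (umemI U).
  by split; apply: (umemS U) U12 => i [].
- exact: los_exists.
Qed.
End Ultraproduct.

Lemma nat_ultrafilter : exists U : ultrafilter nat, forall k, U (fun d => k <= d).
Proof.
have [G [G_ultra cofinite_G]] := @filter.ultraFilterLemma nat filter.eventually _.
have GS (A B : nat -> Prop) : (forall d, A d -> B d) -> G A -> G B.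
  by move=> AB; exact: (@filter.filterS _ G _ A B AB).
unshelve eexists (@Ultrafilter nat G _ _ GS _ _).
- exact: (@filter.filterT _ G).
- by move=> A B; exact: (@filter.filterI _ G _ A B).
- exact: (@filter.filter_not_empty _ G _).
- by move=> A; exact: (filter.in_ultra_setVsetC A G_ultra).
- by move=> k; apply: cofinite_G; exists k.
Qed.

Section UltraWeave.
Variables (L : signature) (n : nat) (phi : formula L).
Variables (Mf : nat -> structure L) (bf : forall d, d.-tuple (bool * bool) -> nat -> Mf d).
Arguments bf : clear implicits.
Hypothesis weave_bf : forall d, is_weave n phi (@tuple_get d) (Some d) 2 None None true (bf d).
Variables (U : ultrafilter nat) (U_large : forall k, U (fun d => k <= d)).

Notation N := (ultraproduct Mf U).

Definition ultra_param (s : nat -> bool * bool) (j : nat) : N :=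
  ucls U (fun d => bf d (trunc d s) j).

Lemma xy_env_ucls (a : nat -> uprod Mf) p :
  xy_env n (fun k => ucls U (a k)) (ultra_param p) =
  (fun k => ucls U (fun d => xy_env n (fun k => a k d) (bf d (trunc d p)) k)).
Proof. by apply: functional_extensionality => k; rewrite /xy_env; case: ifP. Qed.

Lemma sat_ultra_param (a : nat -> N) p :
  sat (xy_env n a (ultra_param p)) phi <->
  U (fun d => sat (xy_env n (fun k => urep (a k) d) (bf d (trunc d p))) phi).
Proof. by rewrite {1}[a]env_ucls xy_env_ucls los. Qed.

Lemma ultra_consistent C D0 :
  (forall d, D0 <= d -> consistent n phi (bf d) (img (trunc d) C)) ->
  consistent n phi ultra_param C.
Proof.
move=> cons_C.
have witness d : exists a : nat -> Mf d, D0 <= d ->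
    forall p, C p -> sat (xy_env n a (bf d (trunc d p))) phi.
  case: (leqP D0 d) => [le_d|_]; last by exists (fun _ => dom_inh (Mf d)).
  by have [a Ha] := cons_C d le_d; exists a => _ p Cp; apply: Ha; exists p.
have [a Ha] := dep_choice witness.
exists (fun k => ucls U (fun d => a d k)) => p Cp.
rewrite xy_env_ucls los; apply: (umemS U) (U_large D0) => d le_d.
exact: Ha.
Qed.

Lemma ultra_2_inconsistent C :
  up_comb omega_get None None C -> k_inconsistent n phi ultra_param 2 C.
Proof.
move=> /up_comb_large_depth [D0 upC]; apply/k_inconsistent2P => p q Cp Cq pq [a Ha].
have [i pq_i] : exists i, p i <> q i.
  apply: NNPP => nex; apply: pq; apply: functional_extensionality => i.
  by apply: NNPP => ne; apply: nex; exists i.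
have /sat_ultra_param Up := Ha p (or_introl erefl).
have /sat_ultra_param Uq := Ha q (or_intror erefl).
have [d [[sat_p sat_q] le_d]] := umem_ex (umemI U (umemI U Up Uq) (U_large (maxn D0 i.+1))).
move: le_d; rewrite geq_max => /andP [le_d lt_i].
have /k_inconsistent2P := (weave_bf d).1 _ (up_comb_trunc (upC d le_d)).
apply; [by exists p|by exists q| |].
- by move=> e; apply: pq_i; rewrite -(trunc_get p lt_i) -(trunc_get q lt_i) e.
- by exists (fun k => urep (a k) d) => _ [->|->].
Qed.

Lemma ultra_is_weave : is_weave n phi omega_get None 2 None None true ultra_param.
Proof.
split; [exact: ultra_2_inconsistent|split].
- move=> C /right_comb_large_depth [D0 RC]; apply: (ultra_consistent (D0 := D0)) => d le_d.
  exact: (weave_bf d).2.1 _ (right_comb_trunc (RC d le_d)).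
- move=> _ C /wide_right_comb_large_depth [D0 WC]; apply: (ultra_consistent (D0 := D0)) => d le_d.
  exact: (weave_bf d).2.2 erefl _ (wide_right_comb_trunc (WC d le_d)).
Qed.
End UltraWeave.

Lemma models_ultraproduct (L : signature) (T : formula L -> Prop) (I : Type)
    (Mf : I -> structure L) (U : ultrafilter I) :
  (forall i, models (Mf i) T) -> models (ultraproduct Mf U) T.
Proof. by move=> MT psi Tpsi e; rewrite [e]env_ucls los; apply: umem_all => i; exact: MT. Qed.

Lemma weave_omega_of_weave_depths (L : signature) (T : formula L -> Prop) n phi :
  (forall d, has_weave_depth T n phi d 2 None None true) ->
  has_weave_omega T n phi 2 None None true.
Proof.
move=> /choice [Mf /all_and2 [MT /(dep_choice (A := fun d => d.-tuple (bool * bool) -> nat -> Mf d))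
  [bf weave_bf]]].
have [U U_large] := nat_ultrafilter.
exists (ultraproduct Mf U); split; first exact: models_ultraproduct.
by exists (ultra_param bf U); exact: ultra_is_weave.
Qed.

Lemma is_weave_mono (L : signature) (M : structure L) n phi (P : Type)
    (get : P -> nat -> bool * bool) d k mm mm' nn (s s' : bool) (b : P -> nat -> M) :
  (forall C, up_comb get d mm' C -> up_comb get d mm C) -> (s' -> s) ->
  is_weave n phi get d k mm nn s b -> is_weave n phi get d k mm' nn s' b.
Proof.
move=> up_mm' s's [up_inc [right_cons wide_cons]]; split=> [C /up_mm'|]; first exact: up_inc.
by split=> // /s's; exact: wide_cons.
Qed.

Lemma has_weave_omega_mono (L : signature) (T : formula L -> Prop) n phi k mm mm' nn (s s' : bool) :
  (forall C, up_comb omega_get None mm' C -> up_comb omega_get None mm C) -> (s' -> s) ->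
  has_weave_omega T n phi k mm nn s -> has_weave_omega T n phi k mm' nn s'.
Proof.
by move=> up_mm' s's [M [MT [b weave_b]]]; exists M; split=> //; exists b;
  exact: is_weave_mono weave_b.
Qed.

Lemma has_weave_depth_mono (L : signature) (T : formula L -> Prop) n phi d k mm mm' nn
    (s s' : bool) :
  (forall C, up_comb (@tuple_get d) (Some d) mm' C -> up_comb (@tuple_get d) (Some d) mm C) ->
  (s' -> s) -> has_weave_depth T n phi d k mm nn s -> has_weave_depth T n phi d k mm' nn s'.
Proof.
by move=> up_mm' s's [M [MT [b weave_b]]]; exists M; split=> //; exists b;
  exact: is_weave_mono weave_b.
Qed.

Theorem proposition4p7 (L : signature) (T : formula L -> Prop)
  (HT : complete_theory T) (n m : nat) (phi : formula L)
  (Hphi : forall i, free_in i phi -> i < n + m) :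
  let c1 := admits_cograph_patterns T n phi in
  (c1 <-> has_weave_omega T n phi 2 None None false) /\
  (c1 <-> has_weave_omega T n phi 2 None None true) /\
  (c1 <-> has_weave_omega T n phi 2 (Some 1) None false) /\
  (c1 <-> has_weave_omega T n phi 2 (Some 1) None true) /\
  (c1 <-> forall d : nat, has_weave_depth T n phi d 2 None None false) /\
  (c1 <-> forall d : nat, has_weave_depth T n phi d 2 (Some 1) None false).
Proof.
move=> c1.
have omega_iff mm s : mm = None \/ mm = Some 1 -> c1 <-> has_weave_omega T n phi 2 mm None s.
  move=> mm_1; have up1_mm C : up_comb omega_get None (Some 1) C -> up_comb omega_get None mm C.
    by case: mm_1 => ->; [exact: up_comb_unbound|].
  split=> [/weave_depth_of_cograph_patterns/weave_omega_of_weave_depths|weave].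
    exact: has_weave_omega_mono (@up_comb_unbound _ _ _ _) _.
  by apply: cograph_patterns_of_weave_omega; exact: has_weave_omega_mono up1_mm _ weave.
have depth_iff mm : mm = None \/ mm = Some 1 ->
    c1 <-> forall d, has_weave_depth T n phi d 2 mm None false.
  move=> mm_1; have up1_mm d C :
      up_comb (@tuple_get d) (Some d) (Some 1) C -> up_comb (@tuple_get d) (Some d) mm C.
    by case: mm_1 => ->; [exact: up_comb_unbound|].
  split=> [/weave_depth_of_cograph_patterns weaves d|weaves].
    exact: has_weave_depth_mono (@up_comb_unbound _ _ _ _) _ (weaves d).
  apply: cograph_patterns_of_weave_depths => d.
  exact: has_weave_depth_mono (up1_mm d) _ (weaves d).
by split; [|split; [|split; [|split; [|split]]]];
  [apply: omega_iff; left|apply: omega_iff; left|apply: omega_iff; right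
  |apply: omega_iff; right|apply: depth_iff; left|apply: depth_iff; right].
Qed.
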